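(* Let $\Bbbk$ be an algebraically closed field and $A\cong\bigoplus_{i=1}^n\Bbbk$ (a semisimple basic algebra). (i) An endofunctor $\mathrm{F}$ of $A\text{-}\mathrm{mod}$ is selfadjoint if and only if $M_{\mathrm{F}}$ is symmetric. (ii) Let $g(x),h(x)$ be polynomials with nonnegative integer coefficients. Then $\mathrm{F}\mapsto M_{\mathrm{F}}$ gives a one-to-one correspondence between isomorphism classes of endofunctors $\mathrm{F}$ of $A\text{-}\mathrm{mod}$ satisfying $g(\mathrm{F})\cong h(\mathrm{F})$ and solutions $X\in\mathrm{Mat}_{n\times n}(\mathbb{Z}_{\geq 0})$ of the matrix equation $g(X)=h(X)$; it restricts to a one-to-one correspondence between isomorphism classes of selfadjoint such endofunctors and symmetric such solutions.
   Context: $A\text{-}\mathrm{mod}$ is the category of finite-dimensional left $A$-modules; functors are additive and $\Bbbk$-linear. Let $L_1,\dots,L_n$ be the pairwise nonisomorphic simple $A$-modules. For an exact endofunctor $\mathrm{F}$, $M_{\mathrm{F}}\in\mathrm{Mat}_{n\times n}(\mathbb{Z}_{\geq0})$ is the matrix of the induced endomorphism of the Grothendieck group of $A\text{-}\mathrm{mod}$ in the basis $[L_1],\dots,[L_n]$. For a polynomial $p(x)=\sum_j c_jx^j$ with $c_j\in\mathbb{Z}_{\geq0}$, $p(\mathrm{F})$ denotes $\bigoplus_j c_j\mathrm{F}^j$ ($\mathrm{F}^0=\mathrm{ID}$, $\mathrm{F}^j$ the $j$-fold composite, $c\,\mathrm{H}$ the direct sum of $c$ copies of $\mathrm{H}$).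 A functor is selfadjoint if it is left adjoint to itself. *)

From HB Require Import structures.
From mathcomp Require Import all_boot all_order all_algebra.
Set Implicit Arguments. Unset Strict Implicit. Unset Printing Implicit Defensive.
Import GRing.Theory.
Local Open Scope ring_scope.

(* The algebra A = k^n = \bigoplus_{i=1}^n k, with pointwise operations.   *)
Section Alg.
Variables (k : fieldType) (n : nat).

Definition alg := {ffun 'I_n -> k}.
Definition aadd (a b : alg) : alg := [ffun i => a i + b i].
Definition ascale (c : k) (a : alg) : alg := [ffun i => c * a i].
Definition amul (a b : alg) : alg := [ffun i => a i * b i].
Definition aone : alg := [ffun => 1].
Definition aidem (i : 'I_n) : alg := [ffun x => (x == i)%:R].

(* Finite-dimensional left A-modules: the space k^d (column vectors) with  *)
(* a unital algebra homomorphism A -> End(k^d) = 'M_d; a acts by v |->     *)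
(* act a *m v.                                                             *)
Record amod := AMod {
  mdim : nat;
  act : alg -> 'M[k]_mdim;
  actD : forall a b, act (aadd a b) = act a + act b;
  actZ : forall c a, act (ascale c a) = c *: act a;
  act1 : act aone = 1%:M;
  actM : forall a b, act (amul a b) = act a *m act b
}.

Definition ishom (M N : amod) (f : 'M[k]_(mdim N, mdim M)) : Prop :=
  forall a, f *m act M a = act N a *m f.
Arguments ishom : clear implicits.

Program Definition msum (M N : amod) : amod :=
  @AMod (mdim M + mdim N) (fun a => block_mx (act M a) 0 0 (act N a)) _ _ _ _.
Next Obligation. by move=> * /=; rewrite !actD add_block_mx !addr0. Qed.
Next Obligation. by move=> * /=; rewrite !actZ scale_block_mx !scaler0. Qed.
Next Obligation. by move=> * /=; rewrite !act1 -scalar_mx_block. Qed.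
Next Obligation.
by move=> * /=; rewrite mulmx_block !actM !mulmx0 !mul0mx !addr0 !add0r.
Qed.

Program Definition mzero : amod := @AMod 0 (fun _ => 0) _ _ _ _.
Next Obligation. by move=> * /=; rewrite addr0. Qed.
Next Obligation. by move=> * /=; rewrite scaler0. Qed.
Next Obligation. by move=> * /=; rewrite [RHS]flatmx0. Qed.
Next Obligation. by move=> * /=; rewrite mulmx0. Qed.

Program Definition simple (j : 'I_n) : amod :=
  @AMod 1 (fun a => (a j)%:M) _ _ _ _.
Next Obligation. by move=> * /=; rewrite ffunE raddfD. Qed.
Next Obligation. by move=> * /=; rewrite ffunE scale_scalar_mx. Qed.
Next Obligation. by move=> * /=; rewrite ffunE. Qed.
Next Obligation. by move=> * /=; rewrite ffunE scalar_mxM. Qed.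

(* Additive k-linear endofunctors of A-mod.  fmap is given on all          *)
(* matrices but only its values on homomorphisms matter.                   *)
Record endofunctor := EndoFunctor {
  fobj : amod -> amod;
  fmap : forall M N : amod,
           'M[k]_(mdim N, mdim M) -> 'M[k]_(mdim (fobj N), mdim (fobj M));
  fmap_hom : forall M N f, ishom M N f -> ishom (fobj M) (fobj N) (fmap f);
  fmap_id : forall M, fmap (1%:M : 'M[k]_(mdim M)) = 1%:M;
  fmap_comp : forall M N P (f : 'M[k]_(mdim N, mdim M)) (g : 'M[k]_(mdim P, mdim N)),
      ishom M N f -> ishom N P g -> fmap (g *m f) = fmap g *m fmap f;
  fmap_lin : forall M N (c : k) (f g : 'M[k]_(mdim N, mdim M)),
      ishom M N f -> ishom M N g -> fmap (c *: f + g) = c *: fmap f + fmap g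
}.

Definition natural (F G : endofunctor)
    (eta : forall M, 'M[k]_(mdim (fobj G M), mdim (fobj F M))) : Prop :=
  (forall M, ishom (fobj F M) (fobj G M) (eta M)) /\
  (forall M N (f : 'M[k]_(mdim N, mdim M)), ishom M N f ->
      eta N *m fmap F f = fmap G f *m eta M).

Definition fiso (F G : endofunctor) : Prop :=
  exists eta : forall M, 'M[k]_(mdim (fobj G M), mdim (fobj F M)),
    natural eta /\
    forall M, exists inv : 'M[k]_(mdim (fobj F M), mdim (fobj G M)),
      inv *m eta M = 1%:M /\ eta M *m inv = 1%:M.

Program Definition fid : endofunctor :=
  @EndoFunctor (fun M => M) (fun M N f => f) _ _ _ _.
Solve All Obligations with done.

Program Definition fcomp (F G : endofunctor) : endofunctor :=
  @EndoFunctor (fun M => fobj F (fobj G M))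
               (fun M N f => fmap F (fmap G f)) _ _ _ _.
Next Obligation. move=> F G M N f Hf; do 2 apply: fmap_hom => //. Qed.
Next Obligation. by move=> * /=; rewrite !fmap_id. Qed.
Next Obligation.
move=> F G M N P f g Hf Hg /=.
by rewrite fmap_comp // fmap_comp //; apply: fmap_hom.
Qed.
Next Obligation.
move=> F G M N c f g Hf Hg /=.
by rewrite fmap_lin // fmap_lin //; apply: fmap_hom.
Qed.

Program Definition fsum (F G : endofunctor) : endofunctor :=
  @EndoFunctor (fun M => msum (fobj F M) (fobj G M))
               (fun M N f => block_mx (fmap F f) 0 0 (fmap G f)) _ _ _ _.
Next Obligation.
move=> F G M N f Hf a /=.
rewrite !mulmx_block !mulmx0 !mul0mx !addr0 !add0r.
by rewrite (@fmap_hom F _ _ _ Hf) (@fmap_hom G _ _ _ Hf).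
Qed.
Next Obligation. by move=> * /=; rewrite !fmap_id -scalar_mx_block. Qed.
Next Obligation.
move=> F G M N P f g Hf Hg /=.
by rewrite mulmx_block !mulmx0 !mul0mx !addr0 !add0r !fmap_comp.
Qed.
Next Obligation.
move=> F G M N c f g Hf Hg /=.
by rewrite scale_block_mx add_block_mx !scaler0 !addr0 !fmap_lin.
Qed.

Program Definition fzero : endofunctor :=
  @EndoFunctor (fun _ => mzero) (fun _ _ _ => 0) _ _ _ _.
Solve All Obligations with by move=> *; rewrite ?[LHS]flatmx0 ?[RHS]flatmx0 => //.

Definition fpow (F : endofunctor) (j : nat) : endofunctor := iter j (fcomp F) fid.
Definition fmuln (H : endofunctor) (c : nat) : endofunctor := iter c (fsum H) fzero.

Definition fpoly (p : {poly nat}) (F : endofunctor) : endofunctor :=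
  foldr (fun j acc => fsum (fmuln (fpow F j) (p`_j)%R) acc) fzero (iota 0 (size p)).

Definition mxpoly_nat (p : {poly nat}) (X : 'M[nat]_n) : 'M[nat]_n :=
  \sum_(j < size p) (X ^+ j) *+ (p`_j)%R.

(* Composition multiplicity [M : L_i] = dim e_i M = rank of the action of  *)
(* the idempotent e_i, and the matrix M_F of the induced endomorphism of   *)
(* the Grothendieck group in the basis [L_1],...,[L_n]: column j is        *)
(* [F L_j] = \sum_i [F L_j : L_i] [L_i].                                   *)
Definition mult (M : amod) (i : 'I_n) : nat := \rank (act M (aidem i)).

Definition MF (F : endofunctor) : 'M[nat]_n :=
  \matrix_(i, j) mult (fobj F (simple j)) i.

Definition selfadjoint (F : endofunctor) : Prop :=
  exists (eta : forall M, 'M[k]_(mdim (fobj F (fobj F M)), mdim M))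
         (eps : forall M, 'M[k]_(mdim M, mdim (fobj F (fobj F M)))),
    natural (F := fid) (G := fcomp F F) eta /\
    natural (F := fcomp F F) (G := fid) eps /\
    (forall M, eps (fobj F M) *m fmap F (eta M) = 1%:M) /\
    (forall M, fmap F (eps M) *m eta (fobj F M) = 1%:M).

End Alg.

Definition symmetric_mx (n : nat) (X : 'M[nat]_n) : Prop := X^T = X.

From mathcomp Require Import all_boot all_order all_algebra.
Set Implicit Arguments. Unset Strict Implicit. Unset Printing Implicit Defensive.
Import GRing.Theory.
Local Open Scope ring_scope.

(* Over k^n a module M is determined by the multiplicities [M : L_j] = dim e_j M,
   and every homomorphism splits along the isotypic components.  Hence an
   additive functor satisfies [F M : L_i] = \sum_j [F L_j : L_i] [M : L_j], so
   F |-> M_F turns composites and direct sums into products and sums, and g(F)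
   into g(M_F); and when M_F = M_G, isomorphisms F L_j ~ G L_j glue along the
   isotypic decompositions into a natural isomorphism F ~ G.  Every matrix X is
   realised by the direct sum of X_ij copies of E_ij : M |-> L_i^[M : L_j];
   since E_ij is left adjoint to E_ji, this functor has a right adjoint with
   matrix X^T, so it is selfadjoint when X is symmetric.  Conversely an
   adjunction F -| F makes Hom(F L_j, L_i) a retract of Hom(L_j, F L_i), whence
   [F L_j : L_i] <= [F L_i : L_j]. *)

Section Modules.
Variables (k : fieldType) (n : nat).

Local Notation amod := (amod k n).
Local Notation alg := (alg k n).
Local Notation homm M N f := (@ishom k n M N f).
Local Notation Fm F M N f := (@fmap k n F M N f).
Implicit Types (i j l : 'I_n) (M N P : amod) (a b : alg) (F G H : endofunctor k n).

(** * Isotypic decomposition of modules *)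

Definition idem_mx M j : 'M[k]_(mdim M) := act M (aidem k j).

Definition azero : alg := ascale 0 (aone k n).

Lemma act_azero M : act M azero = 0.
Proof. by rewrite /azero actZ scale0r. Qed.

Lemma act_sum M (I : Type) (s : seq I) (a : I -> alg) :
  act M (\big[@aadd k n/azero]_(t <- s) a t) = \sum_(t <- s) act M (a t).
Proof.
elim: s => [|x s IH]; first by rewrite !big_nil act_azero.
by rewrite !big_cons actD IH.
Qed.

Lemma big_aaddE (I : Type) (s : seq I) (a : I -> alg) x :
  (\big[@aadd k n/azero]_(t <- s) a t) x = \sum_(t <- s) a t x.
Proof.
elim: s => [|y s IH]; first by rewrite !big_nil /azero !ffunE mul0r.
by rewrite !big_cons ffunE IH.
Qed.

Lemma amul_aideml (a : alg) j : amul (aidem k j) a = ascale (a j) (aidem k j).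
Proof.
by apply/ffunP=> x; rewrite !ffunE; case: eqP => [->|_]; rewrite ?mulr1 ?mul1r ?mul0r ?mulr0.
Qed.

Lemma amulC (a b : alg) : amul a b = amul b a.
Proof. by apply/ffunP=> x; rewrite !ffunE mulrC. Qed.

Lemma idem_mx_act M j a : idem_mx M j *m act M a = a j *: idem_mx M j.
Proof. by rewrite /idem_mx -actM amul_aideml actZ. Qed.

Lemma act_idem_mx M j a : act M a *m idem_mx M j = a j *: idem_mx M j.
Proof. by rewrite /idem_mx -actM amulC amul_aideml actZ. Qed.

Lemma idem_mxM M j l : idem_mx M j *m idem_mx M l = (j == l)%:R *: idem_mx M j.
Proof. by rewrite {2}/idem_mx idem_mx_act ffunE eq_sym. Qed.

Lemma idem_mxK M j : idem_mx M j *m idem_mx M j = idem_mx M j.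
Proof. by rewrite idem_mxM eqxx scale1r. Qed.

Lemma idem_mx_orth M j l : j != l -> idem_mx M j *m idem_mx M l = 0.
Proof. by move=> /negbTE jl; rewrite idem_mxM jl scale0r. Qed.

Lemma sum_idem_mx M : \sum_j idem_mx M j = 1%:M.
Proof.
rewrite -(act1 M) -act_sum; congr (act M _).
apply/ffunP=> x; rewrite big_aaddE ffunE (bigD1 x) //= ffunE eqxx big1 ?addr0 //.
by move=> i /negbTE ix; rewrite ffunE eq_sym ix.
Qed.

Lemma hom_idem_mx M N f : homm M N f -> forall j, idem_mx N j *m f = f *m idem_mx M j.
Proof. by move=> hf j; rewrite hf. Qed.

Lemma hom_comp M N P f g : homm M N f -> homm N P g -> homm M P (g *m f).
Proof. by move=> hf hg a; rewrite -mulmxA hf !mulmxA hg. Qed.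

Lemma hom1 M : homm M M 1%:M.
Proof. by move=> a; rewrite mul1mx mulmx1. Qed.

Lemma hom0 M N : homm M N 0.
Proof. by move=> a; rewrite mul0mx mulmx0. Qed.

Lemma homD M N f g : homm M N f -> homm M N g -> homm M N (f + g).
Proof. by move=> hf hg a; rewrite mulmxDl mulmxDr hf hg. Qed.

Lemma homZ M N c f : homm M N f -> homm M N (c *: f).
Proof. by move=> hf a; rewrite -scalemxAl -scalemxAr hf. Qed.

Lemma hom_sum M N (I : Type) (s : seq I) (P : pred I) (h : I -> 'M_(mdim N, mdim M)) :
  (forall t, P t -> homm M N (h t)) -> homm M N (\sum_(t <- s | P t) h t).
Proof.
move=> hh; elim: s => [|x s IH]; first by rewrite big_nil; apply: hom0.
by rewrite big_cons; case: ifP => // Px; apply: homD => //; apply: hh.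
Qed.

Lemma hom_inv M N (f : 'M[k]_(mdim N, mdim M)) (g : 'M[k]_(mdim M, mdim N)) :
  homm M N f -> g *m f = 1%:M -> f *m g = 1%:M -> homm N M g.
Proof.
move=> hf gf fg a.
by rewrite -[g *m _]mulmx1 -fg !mulmxA -(mulmxA g) -hf mulmxA gf mul1mx.
Qed.

Lemma isotypic_actD j r (a b : alg) : ((aadd a b) j)%:M = (a j)%:M + (b j)%:M :> 'M[k]_r.
Proof. by rewrite ffunE raddfD. Qed.
Lemma isotypic_actZ j r c (a : alg) : ((ascale c a) j)%:M = c *: (a j)%:M :> 'M[k]_r.
Proof. by rewrite ffunE scale_scalar_mx. Qed.
Lemma isotypic_act1 j r : ((aone k n) j)%:M = 1%:M :> 'M[k]_r.
Proof. by rewrite ffunE. Qed.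
Lemma isotypic_actM j r (a b : alg) : ((amul a b) j)%:M = (a j)%:M *m (b j)%:M :> 'M[k]_r.
Proof. by rewrite ffunE scalar_mxM. Qed.

Definition isotypic j r : amod :=
  @AMod k n r (fun a => (a j)%:M)
    (isotypic_actD j r) (isotypic_actZ j r) (isotypic_act1 j r) (isotypic_actM j r).

Lemma idem_mx_isotypic j r l : idem_mx (isotypic j r) l = ((l == j)%:R)%:M.
Proof. by rewrite /idem_mx /= ffunE eq_sym. Qed.

Lemma idem_mx_simple j l : idem_mx (simple k j) l = ((l == j)%:R)%:M.
Proof. by rewrite /idem_mx /= ffunE eq_sym. Qed.

Lemma mult_isotypic j r l : mult (isotypic j r) l = if l == j then r else 0%N.
Proof.
rewrite /mult -/(idem_mx _ _) idem_mx_isotypic.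
by case: eqP => _; rewrite ?mxrank1 // raddf0 mxrank0.
Qed.

Lemma mult_simple j l : mult (simple k j) l = if l == j then 1%N else 0%N.
Proof.
rewrite /mult -/(idem_mx _ _) idem_mx_simple.
by case: eqP => _; [exact: (mxrank1 k 1) | rewrite raddf0 mxrank0].
Qed.

Lemma hom_isotypic j r r' (f : 'M[k]_(r', r)) : homm (isotypic j r) (isotypic j r') f.
Proof. by move=> a /=; rewrite scalar_mxC. Qed.

Lemma hom_simple_isotypic j r (f : 'M[k]_(r, 1)) : homm (simple k j) (isotypic j r) f.
Proof. by move=> a /=; rewrite mul_mx_scalar mul_scalar_mx. Qed.

Lemma hom_isotypic_simple j r (f : 'M[k]_(1, r)) : homm (isotypic j r) (simple k j) f.
Proof. by move=> a /=; rewrite mul_mx_scalar mul_scalar_mx. Qed.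

(* The image of e_j, a copy of L_j^(mult M j), split off through a rank
   factorisation of e_j; locked so that rewriting never unfolds the bases. *)
Fact isot_key : unit. Proof. by []. Qed.
Definition isot_incl M j : 'M[k]_(mdim M, mult M j) :=
  locked_with isot_key (col_base (idem_mx M j)).
Definition isot_proj M j : 'M[k]_(mult M j, mdim M) :=
  locked_with isot_key (row_base (idem_mx M j)).

Lemma isot_incl_proj M j : isot_incl M j *m isot_proj M j = idem_mx M j.
Proof. by rewrite /isot_incl /isot_proj !unlock; exact: mulmx_base. Qed.

Lemma isot_proj_incl M j : isot_proj M j *m isot_incl M j = 1%:M.
Proof.
set R := isot_incl M j; set Q := isot_proj M j.
have eR : R = col_base (idem_mx M j) by rewrite /R /isot_incl unlock.
have eQ : Q = row_base (idem_mx M j) by rewrite /Q /isot_proj unlock.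
have RQRQ : R *m (Q *m R *m Q) = R *m Q.
  by rewrite !mulmxA !isot_incl_proj -mulmxA isot_incl_proj idem_mxK.
have QRQ : Q *m R *m Q = Q.
  by apply: (row_full_inj (col_base_full (idem_mx M j))); rewrite -eR.
by apply: (row_free_inj (row_base_free (idem_mx M j))); rewrite -eQ mul1mx.
Qed.

Lemma isot_proj_idem M j : isot_proj M j *m idem_mx M j = isot_proj M j.
Proof. by rewrite -isot_incl_proj mulmxA isot_proj_incl mul1mx. Qed.

Lemma idem_isot_incl M j : idem_mx M j *m isot_incl M j = isot_incl M j.
Proof. by rewrite -isot_incl_proj -mulmxA isot_proj_incl mulmx1. Qed.

Lemma isot_proj_incl_neq M j l : j != l -> isot_proj M j *m isot_incl M l = 0.
Proof.
move=> jl; rewrite -isot_proj_idem -idem_isot_incl mulmxA -(mulmxA _ (idem_mx M j)).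
by rewrite idem_mx_orth // mulmx0 mul0mx.
Qed.

Lemma isot_proj_act M j a : isot_proj M j *m act M a = a j *: isot_proj M j.
Proof. by rewrite -isot_proj_idem -mulmxA idem_mx_act -scalemxAr isot_proj_idem. Qed.

Lemma act_isot_incl M j a : act M a *m isot_incl M j = a j *: isot_incl M j.
Proof. by rewrite -idem_isot_incl mulmxA act_idem_mx -scalemxAl idem_isot_incl. Qed.

Lemma hom_isot_incl M j : homm (isotypic j (mult M j)) M (isot_incl M j).
Proof. by move=> a /=; rewrite act_isot_incl mul_mx_scalar. Qed.

Lemma hom_isot_proj M j : homm M (isotypic j (mult M j)) (isot_proj M j).
Proof. by move=> a /=; rewrite isot_proj_act mul_scalar_mx. Qed.

Lemma sum_orth_mul p q m (I : finType) (A : I -> 'M[k]_(p, q)) (B : I -> 'M[k]_(q, m)) :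
  (forall t t', t != t' -> A t *m B t' = 0) ->
  (\sum_t A t) *m (\sum_t B t) = \sum_t A t *m B t.
Proof.
move=> orth; rewrite mulmx_suml; apply: eq_bigr => t _.
rewrite mulmx_sumr (bigD1 t) //= big1 ?addr0 // => t' t't.
by apply: orth; rewrite eq_sym.
Qed.

(** * Biproduct decompositions and additive functors *)

Definition biproduct M (I : finType) (N : I -> amod)
    (u : forall t, 'M[k]_(mdim M, mdim (N t))) (v : forall t, 'M[k]_(mdim (N t), mdim M)) :=
  [/\ forall t, homm (N t) M (u t), forall t, homm M (N t) (v t),
      \sum_t u t *m v t = 1%:M, forall t, v t *m u t = 1%:M &
      forall t t', t != t' -> v t *m u t' = 0].
Arguments biproduct M {I} N u v.

Lemma isotypic_biproduct M :
  biproduct M (fun j => isotypic j (mult M j)) (isot_incl M) (isot_proj M).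
Proof.
split; [exact: hom_isot_incl | exact: hom_isot_proj | | exact: isot_proj_incl |].
- by rewrite -(sum_idem_mx M); apply: eq_bigr => j _; rewrite isot_incl_proj.
- exact: isot_proj_incl_neq.
Qed.

Lemma simple_biproduct j r :
  biproduct (isotypic j r) (fun _ : 'I_r => simple k j)
    (fun s => delta_mx s 0) (fun s => delta_mx 0 s).
Proof.
split=> [s|s||s|s s' ss'].
- exact: hom_simple_isotypic.
- exact: hom_isotypic_simple.
- apply/matrixP => s s'; rewrite summxE !mxE (bigD1 s) //= mul_delta_mx !mxE eqxx.
  rewrite big1 ?addr0 ?[s' == s]eq_sym // => t ts.
  by rewrite mul_delta_mx mxE eq_sym (negbTE ts).
- by rewrite mul_delta_mx; apply/matrixP => ? ?; rewrite !mxE !ord1.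
- by rewrite mul_delta_mx_0.
Qed.

Section Functor.
Variable F : endofunctor k n.

Lemma fmap0 M N : Fm F M N 0 = 0.
Proof.
have := fmap_lin F 1 (hom0 M N) (hom0 M N); rewrite scale1r !addr0 => h.
by apply: (@addrI _ (Fm F M N 0)); rewrite addr0 {3}h scale1r.
Qed.

Lemma fmapZ M N c f : homm M N f -> Fm F M N (c *: f) = c *: Fm F M N f.
Proof. by move=> hf; have := fmap_lin F c hf (hom0 M N); rewrite !addr0 fmap0 addr0. Qed.

Lemma fmapD M N f g : homm M N f -> homm M N g -> Fm F M N (f + g) = Fm F M N f + Fm F M N g.
Proof. by move=> hf hg; have := fmap_lin F 1 hf hg; rewrite !scale1r. Qed.

Lemma fmap_sum M N (I : Type) (s : seq I) (P : pred I) (h : I -> 'M_(mdim N, mdim M)) :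
  (forall t, P t -> homm M N (h t)) ->
  Fm F M N (\sum_(t <- s | P t) h t) = \sum_(t <- s | P t) Fm F M N (h t).
Proof.
move=> hh; elim: s => [|x s IH]; first by rewrite !big_nil fmap0.
rewrite !big_cons; case: ifP => // Px; rewrite fmapD ?IH //; first exact: hh.
exact: hom_sum.
Qed.

End Functor.

Lemma mxrank_orth_idem2 m (A B : 'M[k]_m) :
  A *m A = A -> B *m B = B -> A *m B = 0 -> B *m A = 0 ->
  \rank (A + B)%R = (\rank A + \rank B)%N.
Proof.
move=> AA BB AB BA; rewrite -(rank_diag_block_mx A B).
have sumE : A + B = row_mx 1%:M 1%:M *m col_mx A B by rewrite mul_row_col !mul1mx.
have colE : col_mx A B = col_mx A B *m (A + B).
  by rewrite mul_col_mx !mulmxDr AA BB AB BA addr0 add0r.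
have blockE : block_mx A 0 0 B = col_mx A B *m row_mx A B.
  by rewrite mul_col_row AA BB AB BA.
have colE' : col_mx A B = block_mx A 0 0 B *m col_mx 1%:M 1%:M.
  by rewrite mul_block_col !mulmx1 addr0 add0r.
apply/eqP; rewrite eqn_leq; apply/andP; split.
  rewrite sumE; apply: leq_trans (mxrankM_maxr _ _) _.
  by rewrite colE'; apply: mxrankM_maxl.
rewrite blockE; apply: leq_trans (mxrankM_maxl _ _) _.
by rewrite colE; apply: mxrankM_maxr.
Qed.

Lemma mxrank_orth_idem m (I : eqType) (s : seq I) (P : I -> 'M[k]_m) :
  uniq s -> (forall t, P t *m P t = P t) ->
  (forall t t', t != t' -> P t *m P t' = 0) ->
  \rank (\sum_(t <- s) P t)%R = (\sum_(t <- s) \rank (P t))%N.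
Proof.
move=> + idem orth; elim: s => [|x s IH]; first by rewrite !big_nil mxrank0.
rewrite cons_uniq => /andP [xs us].
have orthl : P x *m (\sum_(t <- s) P t) = 0.
  rewrite mulmx_sumr big_seq big1 // => t ts; apply: orth.
  by apply: contraNneq xs => ->.
have orthr : (\sum_(t <- s) P t) *m P x = 0.
  rewrite mulmx_suml big_seq big1 // => t ts; apply: orth.
  by apply: contraNneq xs => <-.
have sum_idem : (\sum_(t <- s) P t) *m (\sum_(t <- s) P t) = \sum_(t <- s) P t.
  rewrite mulmx_suml big_seq [RHS]big_seq; apply: eq_bigr => t ts.
  rewrite mulmx_sumr (bigD1_seq t) //= idem big1 ?addr0 // => t' t't.
  by apply: orth; rewrite eq_sym.
by rewrite !big_cons mxrank_orth_idem2 ?IH ?idem.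
Qed.

Lemma mxrank_conj p q (U : 'M[k]_(p, q)) (Z : 'M[k]_q) (V : 'M[k]_(q, p)) :
  V *m U = 1%:M -> \rank (U *m Z *m V) = \rank Z.
Proof.
move=> VU; rewrite mxrankMfree; last by apply/row_freeP; exists U.
rewrite -mxrank_tr trmx_mul mxrankMfree ?mxrank_tr //.
by apply/row_freeP; exists V^T; rewrite -trmx_mul VU trmx1.
Qed.

Lemma mult_iso M N (f : 'M[k]_(mdim N, mdim M)) (g : 'M[k]_(mdim M, mdim N)) :
  homm M N f -> g *m f = 1%:M -> f *m g = 1%:M -> mult M =1 mult N.
Proof.
move=> hf gf fg i; rewrite /mult -!/(idem_mx _ _).
have -> : idem_mx M i = g *m idem_mx N i *m f.
  by rewrite -mulmxA (hom_idem_mx hf) mulmxA gf mul1mx.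
exact: mxrank_conj.
Qed.

(** * The matrix of a functor *)

Section Multiplicities.
Variable F : endofunctor k n.

(* The images under F of the biproduct maps cut idem_mx (F M) i into mutually
   orthogonal idempotents, each conjugate to idem_mx (F (N t)) i. *)
Lemma mult_fobj_biproduct M (I : finType) (N : I -> amod) u v :
  biproduct M N u v -> mult (fobj F M) =1 (fun i => \sum_t mult (fobj F (N t)) i)%N.
Proof.
move=> [hu hv uv1 vu1 vu0] i.
pose P t := Fm F (N t) M (u t) *m idem_mx (fobj F (N t)) i *m Fm F M (N t) (v t).
have FvFu t t' : Fm F M (N t) (v t) *m Fm F (N t') M (u t') = Fm F (N t') (N t) (v t *m u t').
  by rewrite fmap_comp.
have idemE : idem_mx (fobj F M) i = \sum_t P t.
  rewrite -[LHS]mulmx1 -(fmap_id F M) -uv1 fmap_sum => [|t _]; last exact: hom_comp.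
  rewrite mulmx_sumr; apply: eq_bigr => t _.
  rewrite fmap_comp // mulmxA (hom_idem_mx (fmap_hom F (hu t))) -mulmxA.
  by rewrite mulmxA.
rewrite /mult -/(idem_mx _ _) idemE mxrank_orth_idem ?index_enum_uniq //.
- by apply: eq_bigr => t _; rewrite /P mxrank_conj // FvFu vu1 fmap_id.
- move=> t; rewrite /P !mulmxA -(mulmxA _ _ (Fm F (N t) M (u t))) FvFu vu1 fmap_id mulmx1.
  by rewrite -(mulmxA (Fm F (N t) M (u t))) idem_mxK.
- move=> t t' tt'; rewrite /P !mulmxA -(mulmxA _ _ (Fm F (N t') M (u t'))) FvFu vu0 //.
  by rewrite fmap0 mulmx0 !mul0mx.
Qed.

Lemma mult_fobj_isotypic j r i :
  mult (fobj F (isotypic j r)) i = (r * mult (fobj F (simple k j)) i)%N.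
Proof.
by rewrite (mult_fobj_biproduct (simple_biproduct j r)) big_const_ord iter_addn_0 mulnC.
Qed.

Lemma MFE i j : MF F i j = mult (fobj F (simple k j)) i.
Proof. by rewrite mxE. Qed.

Lemma mult_fobj M i : mult (fobj F M) i = (\sum_j MF F i j * mult M j)%N.
Proof.
rewrite (mult_fobj_biproduct (isotypic_biproduct M)).
by apply: eq_bigr => j _; rewrite mult_fobj_isotypic MFE mulnC.
Qed.

End Multiplicities.

Lemma MF_fcomp F G : MF (fcomp F G) = MF F *m MF G.
Proof. by apply/matrixP => i j; rewrite !mxE /= mult_fobj; apply: eq_bigr => l _; rewrite !mxE. Qed.

Lemma MF_fid : MF (fid k n) = 1%:M.
Proof. by apply/matrixP => i j; rewrite !mxE /= mult_simple; case: eqP. Qed.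

Lemma MF_fsum F G : MF (fsum F G) = MF F + MF G.
Proof. by apply/matrixP => i j; rewrite !mxE /mult /= rank_diag_block_mx. Qed.

Lemma MF_fzero : MF (fzero k n) = 0.
Proof. by apply/matrixP => i j; rewrite !mxE /mult /= mxrank0. Qed.

Lemma MF_fmuln H c : MF (fmuln H c) = MF H *+ c.
Proof.
elim: c => [|c IH]; first by rewrite mulr0n MF_fzero.
by rewrite /fmuln iterS -/(fmuln H c) MF_fsum IH mulrS.
Qed.

Lemma MF_fpow F e : MF (fpow F e) = MF F ^+ e.
Proof.
elim: e => [|e IH]; first by rewrite expr0 MF_fid.
by rewrite /fpow iterS -/(fpow F e) MF_fcomp IH exprS.
Qed.

Lemma MF_foldr_fsum (T : Type) (s : seq T) (G : T -> endofunctor k n) :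
  MF (foldr (fun t acc => fsum (G t) acc) (fzero k n) s) = \sum_(t <- s) MF (G t).
Proof.
elim: s => [|x s IH]; first by rewrite big_nil MF_fzero.
by rewrite big_cons /= MF_fsum IH.
Qed.

Lemma MF_fpoly (p : {poly nat}) F : MF (fpoly p F) = mxpoly_nat p (MF F).
Proof.
rewrite /fpoly MF_foldr_fsum /mxpoly_nat.
have -> : iota 0 (size p) = index_iota 0 (size p) by rewrite /index_iota subn0.
rewrite big_mkord.
by apply: eq_bigr => e _; rewrite MF_fmuln MF_fpow.
Qed.

Lemma fiso_MF F G : fiso F G -> MF F = MF G.
Proof.
move=> [eta [[hom_eta _] eta_inv]]; apply/matrixP => i j; rewrite !mxE.
have [g [geta etag]] := eta_inv (simple k j).
exact: (mult_iso (hom_eta _) geta etag).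
Qed.

(** * Functors with the same matrix are isomorphic *)

Definition match_mx M N : 'M[k]_(mdim N, mdim M) :=
  \sum_j isot_incl N j *m (pid_mx (mult M j) : 'M_(mult N j, mult M j)) *m isot_proj M j.

Lemma hom_match_mx M N : homm M N (match_mx M N).
Proof.
apply: hom_sum => j _.
exact: hom_comp (hom_isot_proj M j) (hom_comp (hom_isotypic _ _) (hom_isot_incl N j)).
Qed.

Lemma match_mxK M N : mult M =1 mult N -> match_mx N M *m match_mx M N = 1%:M.
Proof.
move=> eqMN; rewrite /match_mx sum_orth_mul => [|j l jl]; last first.
  by rewrite !mulmxA -(mulmxA _ (isot_proj N j)) isot_proj_incl_neq // mulmx0 !mul0mx.
have [_ _ sum_incl_proj _ _] := isotypic_biproduct M.
rewrite -sum_incl_proj; apply: eq_bigr => j _.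
rewrite !mulmxA -(mulmxA _ (isot_proj N j)) isot_proj_incl mulmx1.
by rewrite -(mulmxA (isot_incl M j)) mul_pid_mx -eqMN !minnn pid_mx_1 mulmx1.
Qed.

Definition glue F G M (I : finType) (N : I -> amod)
    (u : forall t, 'M[k]_(mdim M, mdim (N t))) (v : forall t, 'M[k]_(mdim (N t), mdim M))
    (al : forall t, 'M[k]_(mdim (fobj G (N t)), mdim (fobj F (N t)))) :
    'M[k]_(mdim (fobj G M), mdim (fobj F M)) :=
  \sum_t Fm G (N t) M (u t) *m al t *m Fm F M (N t) (v t).
Arguments glue F G {M I N} u v al.

Lemma hom_glue F G M (I : finType) (N : I -> amod) u v al :
  biproduct M N u v -> (forall t, homm (fobj F (N t)) (fobj G (N t)) (al t)) ->
  homm (fobj F M) (fobj G M) (glue F G u v al).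
Proof.
move=> [hu hv _ _ _] hal; apply: hom_sum => t _.
apply: hom_comp (fmap_hom F (hv t)) _; exact: hom_comp (hal t) (fmap_hom G (hu t)).
Qed.

Lemma glueK F G M (I : finType) (N : I -> amod) u v al be :
  biproduct M N u v -> (forall t, be t *m al t = 1%:M) ->
  glue G F u v be *m glue F G u v al = 1%:M.
Proof.
move=> [hu hv uv1 vu1 vu0] beal; rewrite /glue sum_orth_mul => [|t t' tt']; last first.
  rewrite !mulmxA -(mulmxA _ (Fm G M (N t) (v t))) -fmap_comp // vu0 //.
  by rewrite fmap0 mulmx0 !mul0mx.
rewrite -(fmap_id F M) -uv1 fmap_sum => [|t _]; last exact: hom_comp.
apply: eq_bigr => t _.
rewrite !mulmxA -(mulmxA _ (Fm G M (N t) (v t))) -fmap_comp // vu1 fmap_id mulmx1.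
by rewrite -(mulmxA _ (be t)) beal mulmx1 fmap_comp.
Qed.

Lemma delta_row_mul r r' (c : 'M[k]_(r', r)) (s' : 'I_r') :
  delta_mx (0 : 'I_1) s' *m c = \sum_s c s' s *: delta_mx 0 s.
Proof. by rewrite -rowE [LHS]row_sum_delta; apply: eq_bigr => s _; rewrite mxE. Qed.

Lemma mul_delta_col r r' (c : 'M[k]_(r', r)) (s : 'I_r) :
  c *m delta_mx s (0 : 'I_1) = \sum_s' c s' s *: delta_mx s' 0.
Proof.
rewrite -colE; apply/matrixP => i j; rewrite summxE !mxE (bigD1 i) //= !mxE eqxx.
rewrite big1 ?addr0 => [|s' s'i]; first by rewrite !ord1 eqxx mulr1.
by rewrite !mxE eq_sym (negbTE s'i) mulr0.
Qed.

Section FunctorIso.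
Variables F G : endofunctor k n.

Definition simple_iso j := match_mx (fobj F (simple k j)) (fobj G (simple k j)).

Definition isotypic_iso j r :=
  glue F G (M := isotypic j r) (N := fun _ : 'I_r => simple k j)
    (fun s => delta_mx s 0) (fun s => delta_mx 0 s) (fun _ => simple_iso j).

Definition funiso M :=
  glue F G (N := fun j => isotypic j (mult M j))
    (isot_incl M) (isot_proj M) (fun j => isotypic_iso j (mult M j)).

Lemma hom_isotypic_iso j r :
  homm (fobj F (isotypic j r)) (fobj G (isotypic j r)) (isotypic_iso j r).
Proof. by apply: hom_glue (simple_biproduct j r) _ => _; apply: hom_match_mx. Qed.

Lemma isotypic_iso_natural j r r' (c : 'M[k]_(r', r)) :
  isotypic_iso j r' *m Fm F (isotypic j r) (isotypic j r') c =
  Fm G (isotypic j r) (isotypic j r') c *m isotypic_iso j r.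
Proof.
transitivity (\sum_(s' < r') \sum_(s < r) c s' s *:
   (Fm G (simple k j) (isotypic j r') (delta_mx s' 0) *m simple_iso j *m
     Fm F (isotypic j r) (simple k j) (delta_mx 0 s))).
  rewrite /isotypic_iso /glue mulmx_suml; apply: eq_bigr => s' _.
  rewrite -mulmxA -fmap_comp; [|exact: hom_isotypic|exact: hom_isotypic_simple].
  rewrite delta_row_mul fmap_sum => [|s _]; last exact/homZ/hom_isotypic_simple.
  rewrite mulmx_sumr; apply: eq_bigr => s _.
  by rewrite fmapZ ?scalemxAr //; apply: hom_isotypic_simple.
rewrite exchange_big /isotypic_iso /glue mulmx_sumr; apply: eq_bigr => s _.
rewrite !mulmxA -fmap_comp; [|exact: hom_simple_isotypic|exact: hom_isotypic].
rewrite mul_delta_col fmap_sum => [|s' _]; last exact/homZ/hom_simple_isotypic.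
rewrite !mulmx_suml; apply: eq_bigr => s' _.
by rewrite fmapZ -?scalemxAl //; apply: hom_simple_isotypic.
Qed.

(* A homomorphism factors through the isotypic components, where
   isotypic_iso_natural applies. *)
Lemma funiso_natural M N f : homm M N f ->
  funiso N *m Fm F M N f = Fm G M N f *m funiso M.
Proof.
move=> hf; rewrite /funiso /glue mulmx_suml mulmx_sumr; apply: eq_bigr => j _.
set c := isot_proj N j *m f *m isot_incl M j.
have hc : homm (isotypic j (mult M j)) (isotypic j (mult N j)) c by apply: hom_isotypic.
have [hpM hpN] := (hom_isot_proj M j, hom_isot_proj N j).
have [hiM hiN] := (hom_isot_incl M j, hom_isot_incl N j).
have projE : isot_proj N j *m f = c *m isot_proj M j.
  by rewrite -mulmxA isot_incl_proj -{1}isot_proj_idem -mulmxA (hom_idem_mx hf) mulmxA.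
have inclE : f *m isot_incl M j = isot_incl N j *m c.
  by rewrite !mulmxA isot_incl_proj (hom_idem_mx hf) -mulmxA idem_isot_incl.
rewrite -mulmxA -(fmap_comp F hf hpN) projE (fmap_comp F hpM hc).
rewrite !mulmxA -(mulmxA _ (isotypic_iso _ _)) isotypic_iso_natural mulmxA.
by rewrite -(fmap_comp G hc hiN) -inclE (fmap_comp G hiM hf).
Qed.

Lemma natural_funiso : natural funiso.
Proof.
split=> [M|M N f hf]; last exact: funiso_natural.
by apply: hom_glue (isotypic_biproduct M) _ => j; apply: hom_isotypic_iso.
Qed.

End FunctorIso.

Definition natiso F G
    (th : forall M, 'M[k]_(mdim (fobj G M), mdim (fobj F M)))
    (th' : forall M, 'M[k]_(mdim (fobj F M), mdim (fobj G M))) :=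
  natural th /\ forall M, th' M *m th M = 1%:M /\ th M *m th' M = 1%:M.

Lemma natiso_funiso F G :
  MF F = MF G -> natiso (funiso F G) (funiso G F).
Proof.
have inv H H' : MF H = MF H' -> forall M, funiso H' H M *m funiso H H' M = 1%:M.
  move=> eqMF M; apply: glueK (isotypic_biproduct M) _ => j.
  apply: glueK (simple_biproduct j _) _ => _.
  by apply: match_mxK => i; rewrite -!MFE eqMF.
by move=> eqMF; split=> [|M]; [apply: natural_funiso | split; apply: inv].
Qed.

Lemma fiso_of_MF F G : MF F = MF G -> fiso F G.
Proof.
move=> /natiso_funiso [nat_th inv]; exists (funiso F G); split=> // M.
by exists (funiso G F M).
Qed.

(** * Selfadjoint functors have symmetric matrices *)

Lemma hom_to_simpleP N i (w : 'M[k]_(1, mdim N)) :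
  homm N (simple k i) w <-> w *m idem_mx N i = w.
Proof.
split=> [hw|wE a /=]; first by rewrite -(hom_idem_mx hw) idem_mx_simple eqxx mul1mx.
by rewrite -wE -mulmxA idem_mx_act -scalemxAr wE mul_scalar_mx.
Qed.

Lemma hom_from_simpleP N j (v : 'M[k]_(mdim N, 1)) :
  homm (simple k j) N v <-> idem_mx N j *m v = v.
Proof.
split=> [hv|Ev a /=]; first by rewrite (hom_idem_mx hv) idem_mx_simple eqxx mulmx1.
by rewrite -Ev mulmxA act_idem_mx -scalemxAl Ev mul_mx_scalar.
Qed.

Lemma mxrank_le_factor p q (E : 'M[k]_p) (E' : 'M[k]_q) (X : 'M[k]_(p, q)) (Y : 'M[k]_(q, p)) :
  E = X *m Y -> X = X *m E'^T -> (\rank E <= \rank E')%N.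
Proof.
move=> EXY XE'; rewrite EXY; apply: leq_trans (mxrankM_maxl _ _) _.
by rewrite XE'; apply: leq_trans (mxrankM_maxr _ _) _; rewrite mxrank_tr.
Qed.

(* Hom(F L_j, L_i) is a retract of Hom(L_j, F L_i) when F is left adjoint to
   itself; for a module N, Hom(N, L_i) has dimension mult N i. *)
Lemma adjunction_mult_le F
    (eta : forall M, 'M[k]_(mdim (fobj F (fobj F M)), mdim M))
    (eps : forall M, 'M[k]_(mdim M, mdim (fobj F (fobj F M)))) :
  natural (F := fid k n) (G := fcomp F F) eta ->
  natural (F := fcomp F F) (G := fid k n) eps ->
  (forall M, eps (fobj F M) *m fmap F (eta M) = 1%:M) ->
  forall i j, (mult (fobj F (simple k j)) i <= mult (fobj F (simple k i)) j)%N.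
Proof.
move=> [hom_eta _] [_ nat_eps] triangle i j.
set N := fobj F (simple k j); set N' := fobj F (simple k i).
set E := idem_mx N i; set E' := idem_mx N' j.
pose Phi (w : 'M[k]_(1, mdim N)) := Fm F N (simple k i) w *m eta (simple k j).
pose Psi (v : 'M[k]_(mdim N', 1)) := eps (simple k i) *m Fm F (simple k j) N' v.
have hom_Phi w : homm N (simple k i) w -> homm (simple k j) N' (Phi w).
  by move=> hw; apply: hom_comp (hom_eta _) (fmap_hom F hw).
have PsiK w : homm N (simple k i) w -> Psi (Phi w) = w.
  move=> hw; rewrite /Psi /Phi (fmap_comp F (hom_eta _) (fmap_hom F hw)) mulmxA.
  by rewrite (nat_eps _ _ _ hw) /= -mulmxA triangle mulmx1.
have hom_rowE r : homm N (simple k i) (row r E).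
  by apply/hom_to_simpleP; rewrite rowE -mulmxA idem_mxK.
have hom_E'col s : homm (simple k j) N' (E' *m delta_mx s 0).
  by apply/hom_from_simpleP; rewrite mulmxA idem_mxK.
pose X := \matrix_(r < mdim N) (Phi (row r E))^T.
pose Y := \matrix_(s < mdim N') Psi (E' *m delta_mx s 0).
have PsiE v : homm (simple k j) N' v -> Psi v = v^T *m Y.
  move=> /hom_from_simpleP Ev; rewrite mulmx_sum_row -{1}Ev [v in E' *m v]matrix_sum_delta.
  rewrite mulmx_sumr /Psi fmap_sum => [|s _]; last first.
    by rewrite big_ord1 -scalemxAr; apply: homZ.
  rewrite mulmx_sumr; apply: eq_bigr => s _.
  by rewrite big_ord1 rowK -scalemxAr fmapZ // -scalemxAr mxE.
apply: (@mxrank_le_factor _ _ E E' X Y).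
  apply/row_matrixP => r; have hw := hom_rowE r.
  by rewrite row_mul rowK -PsiE ?PsiK //; apply: hom_Phi.
apply/row_matrixP => r; rewrite row_mul rowK -trmx_mul.
by have /hom_from_simpleP -> := hom_Phi _ (hom_rowE r).
Qed.

Lemma selfadjoint_sym F : selfadjoint F -> symmetric_mx (MF F).
Proof.
move=> [eta [eps [nat_eta [nat_eps [triangle _]]]]]; apply/matrixP => i j; rewrite !mxE.
by apply/eqP; rewrite eqn_leq !(adjunction_mult_le nat_eta nat_eps triangle).
Qed.

(** * Adjunctions *)

Definition adjunction F G
    (eta : forall M, 'M[k]_(mdim (fobj G (fobj F M)), mdim M))
    (eps : forall M, 'M[k]_(mdim M, mdim (fobj F (fobj G M)))) :=
  natural (F := fid k n) (G := fcomp G F) eta /\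
  natural (F := fcomp F G) (G := fid k n) eps /\
  (forall M, eps (fobj F M) *m fmap F (eta M) = 1%:M) /\
  (forall M, fmap G (eps M) *m eta (fobj G M) = 1%:M).
Arguments adjunction : clear implicits.

Definition adjoint F G := exists eta eps, adjunction F G eta eps.

Lemma selfadjointE F : selfadjoint F <-> adjoint F F.
Proof. by []. Qed.

Section AdjunctionLaws.
Variables F G : endofunctor k n.
Variables (eta : forall M, 'M[k]_(mdim (fobj G (fobj F M)), mdim M))
          (eps : forall M, 'M[k]_(mdim M, mdim (fobj F (fobj G M)))).
Hypothesis adjFG : adjunction F G eta eps.

Lemma hom_unit M : homm M (fobj G (fobj F M)) (eta M).
Proof. by case: adjFG => [[hom_eta _] _]; apply: hom_eta. Qed.

Lemma hom_counit M : homm (fobj F (fobj G M)) M (eps M).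
Proof. by case: adjFG => _ [[hom_eps _] _]; apply: hom_eps. Qed.

Lemma unit_natural M N f : homm M N f ->
  eta N *m f = Fm G (fobj F M) (fobj F N) (Fm F M N f) *m eta M.
Proof. by case: adjFG => [[_ nat_eta] _]; apply: nat_eta. Qed.

Lemma counit_natural M N f : homm M N f ->
  eps N *m Fm F (fobj G M) (fobj G N) (Fm G M N f) = f *m eps M.
Proof. by case: adjFG => _ [[_ nat_eps] _]; apply: nat_eps. Qed.

Lemma triangle_left M : eps (fobj F M) *m Fm F M (fobj G (fobj F M)) (eta M) = 1%:M.
Proof. by case: adjFG => _ [_ [triangle _]]; apply: triangle. Qed.

Lemma triangle_right M : Fm G (fobj F (fobj G M)) M (eps M) *m eta (fobj G M) = 1%:M.
Proof. by case: adjFG => _ [_ [_ triangle]]; apply: triangle. Qed.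

End AdjunctionLaws.

Lemma adjunction_fzero : adjunction (fzero k n) (fzero k n) (fun _ => 0) (fun _ => 0).
Proof.
split; [|split; [|split]].
- by split=> [M|M N f hf /=]; [apply: hom0 | rewrite mul0mx mulmx0].
- by split=> [M|M N f hf /=]; [apply: hom0 | rewrite mul0mx mulmx0].
- by move=> M; rewrite [LHS]flatmx0 [RHS]flatmx0.
- by move=> M; rewrite [LHS]flatmx0 [RHS]flatmx0.
Qed.

Definition msum_inl M1 M2 : 'M[k]_(mdim (msum M1 M2), mdim M1) := col_mx 1%:M 0.
Definition msum_inr M1 M2 : 'M[k]_(mdim (msum M1 M2), mdim M2) := col_mx 0 1%:M.
Definition msum_projl M1 M2 : 'M[k]_(mdim M1, mdim (msum M1 M2)) := row_mx 1%:M 0.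
Definition msum_projr M1 M2 : 'M[k]_(mdim M2, mdim (msum M1 M2)) := row_mx 0 1%:M.

Lemma hom_col_mx N M1 M2 f g : homm N M1 f -> homm N M2 g -> homm N (msum M1 M2) (col_mx f g).
Proof.
by move=> hf hg a /=; rewrite mul_col_mx mul_block_col !mul0mx addr0 add0r hf hg.
Qed.

Lemma hom_row_mx M1 M2 N f g : homm M1 N f -> homm M2 N g -> homm (msum M1 M2) N (row_mx f g).
Proof.
by move=> hf hg a /=; rewrite mul_mx_row mul_row_block !mulmx0 addr0 add0r hf hg.
Qed.

Lemma hom_msum_inl M1 M2 : homm M1 (msum M1 M2) (msum_inl M1 M2).
Proof. exact: hom_col_mx (hom1 _) (hom0 _ _). Qed.
Lemma hom_msum_inr M1 M2 : homm M2 (msum M1 M2) (msum_inr M1 M2).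
Proof. exact: hom_col_mx (hom0 _ _) (hom1 _). Qed.
Lemma hom_msum_projl M1 M2 : homm (msum M1 M2) M1 (msum_projl M1 M2).
Proof. exact: hom_row_mx (hom1 _) (hom0 _ _). Qed.
Lemma hom_msum_projr M1 M2 : homm (msum M1 M2) M2 (msum_projr M1 M2).
Proof. exact: hom_row_mx (hom0 _ _) (hom1 _). Qed.

Lemma msum_projl_col M1 M2 m (A : 'M[k]_(mdim M1, m)) B : msum_projl M1 M2 *m col_mx A B = A.
Proof. by rewrite mul_row_col mul1mx mul0mx addr0. Qed.
Lemma msum_projr_col M1 M2 m A (B : 'M[k]_(mdim M2, m)) : msum_projr M1 M2 *m col_mx A B = B.
Proof. by rewrite mul_row_col mul1mx mul0mx add0r. Qed.
Lemma row_msum_inl M1 M2 m (A : 'M[k]_(m, mdim M1)) B : row_mx A B *m msum_inl M1 M2 = A.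
Proof. by rewrite mul_row_col mulmx1 mulmx0 addr0. Qed.
Lemma row_msum_inr M1 M2 m A (B : 'M[k]_(m, mdim M2)) : row_mx A B *m msum_inr M1 M2 = B.
Proof. by rewrite mul_row_col mulmx1 mulmx0 add0r. Qed.

Lemma block_msum_inl M1 M2 N1 N2 (A : 'M[k]_(mdim N1, mdim M1)) (B : 'M[k]_(mdim N2, mdim M2)) :
  block_mx A 0 0 B *m msum_inl M1 M2 = msum_inl N1 N2 *m A.
Proof. by rewrite mul_block_col mul_col_mx !mulmx1 !mul1mx !mulmx0 !mul0mx ?addr0 ?add0r. Qed.
Lemma block_msum_inr M1 M2 N1 N2 (A : 'M[k]_(mdim N1, mdim M1)) (B : 'M[k]_(mdim N2, mdim M2)) :
  block_mx A 0 0 B *m msum_inr M1 M2 = msum_inr N1 N2 *m B.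
Proof. by rewrite mul_block_col mul_col_mx !mulmx1 !mul1mx !mulmx0 !mul0mx ?addr0 ?add0r. Qed.
Lemma msum_projl_block M1 M2 N1 N2 (A : 'M[k]_(mdim N1, mdim M1)) (B : 'M[k]_(mdim N2, mdim M2)) :
  msum_projl N1 N2 *m block_mx A 0 0 B = A *m msum_projl M1 M2.
Proof. by rewrite mul_row_block mul_mx_row !mulmx1 !mul1mx !mulmx0 !mul0mx ?addr0 ?add0r. Qed.
Lemma msum_projr_block M1 M2 N1 N2 (A : 'M[k]_(mdim N1, mdim M1)) (B : 'M[k]_(mdim N2, mdim M2)) :
  msum_projr N1 N2 *m block_mx A 0 0 B = B *m msum_projr M1 M2.
Proof. by rewrite mul_row_block mul_mx_row !mulmx1 !mul1mx !mulmx0 !mul0mx ?addr0 ?add0r. Qed.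

Lemma row_msum_inlr M1 M2 : row_mx (msum_inl M1 M2) (msum_inr M1 M2) = 1%:M.
Proof. by rewrite -block_mxEh -scalar_mx_block. Qed.
Lemma col_msum_projlr M1 M2 : col_mx (msum_projl M1 M2) (msum_projr M1 M2) = 1%:M.
Proof. by rewrite -block_mxEv -scalar_mx_block. Qed.

Section AdjunctionSum.
Variables F1 G1 F2 G2 : endofunctor k n.
Variables (eta1 : forall M, 'M[k]_(mdim (fobj G1 (fobj F1 M)), mdim M))
          (eps1 : forall M, 'M[k]_(mdim M, mdim (fobj F1 (fobj G1 M))))
          (eta2 : forall M, 'M[k]_(mdim (fobj G2 (fobj F2 M)), mdim M))
          (eps2 : forall M, 'M[k]_(mdim M, mdim (fobj F2 (fobj G2 M)))).
Hypotheses (adj1 : adjunction F1 G1 eta1 eps1) (adj2 : adjunction F2 G2 eta2 eps2).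

Local Notation FM M := (msum (fobj F1 M) (fobj F2 M)).
Local Notation GM M := (msum (fobj G1 M) (fobj G2 M)).

Definition sum_unit M : 'M[k]_(mdim (fobj (fsum G1 G2) (FM M)), mdim M) :=
  col_mx (Fm G1 (fobj F1 M) (FM M) (msum_inl _ _) *m eta1 M)
         (Fm G2 (fobj F2 M) (FM M) (msum_inr _ _) *m eta2 M).

Definition sum_counit M : 'M[k]_(mdim M, mdim (fobj (fsum F1 F2) (GM M))) :=
  row_mx (eps1 M *m Fm F1 (GM M) (fobj G1 M) (msum_projl _ _))
         (eps2 M *m Fm F2 (GM M) (fobj G2 M) (msum_projr _ _)).

Lemma hom_sum_unit M : homm M (fobj (fsum G1 G2) (FM M)) (sum_unit M).
Proof.
apply: hom_col_mx.
  exact: hom_comp (hom_unit adj1 M) (fmap_hom G1 (hom_msum_inl _ _)).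
exact: hom_comp (hom_unit adj2 M) (fmap_hom G2 (hom_msum_inr _ _)).
Qed.

Lemma hom_sum_counit M : homm (fobj (fsum F1 F2) (GM M)) M (sum_counit M).
Proof.
apply: hom_row_mx.
  exact: hom_comp (fmap_hom F1 (hom_msum_projl _ _)) (hom_counit adj1 M).
exact: hom_comp (fmap_hom F2 (hom_msum_projr _ _)) (hom_counit adj2 M).
Qed.

Lemma sum_unit_natural M N f : homm M N f ->
  sum_unit N *m f = Fm (fsum G1 G2) _ _ (Fm (fsum F1 F2) M N f) *m sum_unit M.
Proof.
move=> hf /=; rewrite mul_col_mx mul_block_col !mul0mx addr0 add0r.
have hFf := fmap_hom (fsum F1 F2) hf.
congr col_mx.
  rewrite -mulmxA (unit_natural adj1 hf) mulmxA -(fmap_comp G1 (fmap_hom F1 hf) (hom_msum_inl _ _)).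
  by rewrite [RHS]mulmxA -(fmap_comp G1 (hom_msum_inl _ _) hFf) block_msum_inl.
rewrite -mulmxA (unit_natural adj2 hf) mulmxA -(fmap_comp G2 (fmap_hom F2 hf) (hom_msum_inr _ _)).
by rewrite [RHS]mulmxA -(fmap_comp G2 (hom_msum_inr _ _) hFf) block_msum_inr.
Qed.

Lemma sum_counit_natural M N f : homm M N f ->
  sum_counit N *m Fm (fsum F1 F2) _ _ (Fm (fsum G1 G2) M N f) = f *m sum_counit M.
Proof.
move=> hf /=; rewrite mul_row_block mul_mx_row !mulmx0 addr0 add0r.
have hGf := fmap_hom (fsum G1 G2) hf.
congr row_mx.
  rewrite -mulmxA -(fmap_comp F1 hGf (hom_msum_projl _ _)) msum_projl_block.
  rewrite (fmap_comp F1 (hom_msum_projl _ _) (fmap_hom G1 hf)) mulmxA.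
  by rewrite (counit_natural adj1 hf) mulmxA.
rewrite -mulmxA -(fmap_comp F2 hGf (hom_msum_projr _ _)) msum_projr_block.
rewrite (fmap_comp F2 (hom_msum_projr _ _) (fmap_hom G2 hf)) mulmxA.
by rewrite (counit_natural adj2 hf) mulmxA.
Qed.

Lemma sum_triangle_left M :
  sum_counit (fobj (fsum F1 F2) M) *m Fm (fsum F1 F2) M _ (sum_unit M) = 1%:M.
Proof.
rewrite /= mul_row_block !mulmx0 addr0 add0r -row_msum_inlr; congr row_mx.
  rewrite -mulmxA -(fmap_comp F1 (hom_sum_unit M) (hom_msum_projl _ _)) msum_projl_col.
  rewrite (fmap_comp F1 (hom_unit adj1 M) (fmap_hom G1 (hom_msum_inl _ _))) mulmxA.
  by rewrite (counit_natural adj1 (hom_msum_inl _ _)) -mulmxA triangle_left // mulmx1.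
rewrite -mulmxA -(fmap_comp F2 (hom_sum_unit M) (hom_msum_projr _ _)) msum_projr_col.
rewrite (fmap_comp F2 (hom_unit adj2 M) (fmap_hom G2 (hom_msum_inr _ _))) mulmxA.
by rewrite (counit_natural adj2 (hom_msum_inr _ _)) -mulmxA triangle_left // mulmx1.
Qed.

Lemma sum_triangle_right M :
  Fm (fsum G1 G2) _ M (sum_counit M) *m sum_unit (fobj (fsum G1 G2) M) = 1%:M.
Proof.
rewrite /= mul_block_col !mul0mx addr0 add0r -col_msum_projlr; congr col_mx.
  rewrite mulmxA -(fmap_comp G1 (hom_msum_inl _ _) (hom_sum_counit M)) row_msum_inl.
  rewrite (fmap_comp G1 (fmap_hom F1 (hom_msum_projl _ _)) (hom_counit adj1 M)) -mulmxA.
  by rewrite -(unit_natural adj1 (hom_msum_projl _ _)) mulmxA triangle_right // mul1mx.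
rewrite mulmxA -(fmap_comp G2 (hom_msum_inr _ _) (hom_sum_counit M)) row_msum_inr.
rewrite (fmap_comp G2 (fmap_hom F2 (hom_msum_projr _ _)) (hom_counit adj2 M)) -mulmxA.
by rewrite -(unit_natural adj2 (hom_msum_projr _ _)) mulmxA triangle_right // mul1mx.
Qed.

Lemma adjunction_fsum : adjunction (fsum F1 F2) (fsum G1 G2) sum_unit sum_counit.
Proof.
split; [split=> [M|M N f]; [exact: hom_sum_unit | exact: sum_unit_natural] |].
split; [split=> [M|M N f]; [exact: hom_sum_counit | exact: sum_counit_natural] |].
by split=> M; [apply: sum_triangle_left | apply: sum_triangle_right].
Qed.

End AdjunctionSum.

Lemma adjoint_fsum (F1 G1 F2 G2 : endofunctor k n) :
  adjoint F1 G1 -> adjoint F2 G2 -> adjoint (fsum F1 F2) (fsum G1 G2).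
Proof. by move=> [e1 [p1 adj1]] [e2 [p2 adj2]]; do 2 eexists; apply: adjunction_fsum adj1 adj2. Qed.

Lemma adjoint_fmuln F G c : adjoint F G -> adjoint (fmuln F c) (fmuln G c).
Proof.
move=> adjFG; elim: c => [|c IH]; first by do 2 eexists; apply: adjunction_fzero.
exact: adjoint_fsum.
Qed.

Lemma natiso_sym F G th th' : natiso (F := F) (G := G) th th' -> natiso th' th.
Proof.
move=> [[hom_th nat_th] inv]; split=> [|M]; last by have [? ?] := inv M.
split=> [M|M N f hf]; first by have [th'th thth'] := inv M; apply: hom_inv (hom_th M) _ _.
have [_ ththM'] := inv M; have [th'thN _] := inv N.
by rewrite -[LHS]mulmx1 -ththM' !mulmxA -(mulmxA (th' N)) -nat_th // mulmxA th'thN mul1mx.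
Qed.

Section AdjunctionTransfer.
Variables F G F' G' : endofunctor k n.
Variables (eta : forall M, 'M[k]_(mdim (fobj G (fobj F M)), mdim M))
          (eps : forall M, 'M[k]_(mdim M, mdim (fobj F (fobj G M)))).
Variables (th : forall M, 'M[k]_(mdim (fobj F' M), mdim (fobj F M)))
          (th' : forall M, 'M[k]_(mdim (fobj F M), mdim (fobj F' M)))
          (ph : forall M, 'M[k]_(mdim (fobj G' M), mdim (fobj G M)))
          (ph' : forall M, 'M[k]_(mdim (fobj G M), mdim (fobj G' M))).
Hypotheses (adjFG : adjunction F G eta eps) (isoF : natiso th th') (isoG : natiso ph ph').

Definition transfer_unit M :=
  ph (fobj F' M) *m Fm G (fobj F M) (fobj F' M) (th M) *m eta M.
Definition transfer_counit M :=
  eps M *m Fm F (fobj G' M) (fobj G M) (ph' M) *m th' (fobj G' M).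

Lemma hom_transfer_unit M : homm M (fobj G' (fobj F' M)) (transfer_unit M).
Proof.
have [[hom_th _] _] := isoF; have [[hom_ph _] _] := isoG.
exact: hom_comp (hom_unit adjFG M) (hom_comp (fmap_hom G (hom_th M)) (hom_ph _)).
Qed.

Lemma hom_transfer_counit M : homm (fobj F' (fobj G' M)) M (transfer_counit M).
Proof.
have [[hom_th' _] _] := natiso_sym isoF; have [[hom_ph' _] _] := natiso_sym isoG.
exact: hom_comp (hom_th' _) (hom_comp (fmap_hom F (hom_ph' M)) (hom_counit adjFG M)).
Qed.

Lemma transfer_unit_natural M N f : homm M N f ->
  transfer_unit N *m f = Fm G' _ _ (Fm F' M N f) *m transfer_unit M.
Proof.
move=> hf; have [[hom_th nat_th] _] := isoF; have [[_ nat_ph] _] := isoG.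
rewrite /transfer_unit -!mulmxA (unit_natural adjFG hf) !mulmxA.
rewrite -(mulmxA _ (Fm G _ _ (th N))) -(fmap_comp G (fmap_hom F hf) (hom_th N)) nat_th //.
rewrite (fmap_comp G (hom_th M) (fmap_hom F' hf)) !mulmxA nat_ph //.
exact: fmap_hom.
Qed.

Lemma transfer_counit_natural M N f : homm M N f ->
  transfer_counit N *m Fm F' _ _ (Fm G' M N f) = f *m transfer_counit M.
Proof.
move=> hf; have [[_ nat_th'] _] := natiso_sym isoF.
have [[hom_ph' nat_ph'] _] := natiso_sym isoG.
rewrite /transfer_counit -!mulmxA nat_th'; last exact: fmap_hom.
rewrite !mulmxA -(mulmxA _ (Fm F _ _ (ph' N))) -(fmap_comp F (fmap_hom G' hf) (hom_ph' N)).
by rewrite nat_ph' // (fmap_comp F (hom_ph' M) (fmap_hom G hf)) mulmxA (counit_natural adjFG hf).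
Qed.

Lemma transfer_triangle_left M :
  transfer_counit (fobj F' M) *m Fm F' M _ (transfer_unit M) = 1%:M.
Proof.
have [[hom_th _] inv_th] := isoF; have [_ inv_ph] := isoG.
have [[_ nat_th'] _] := natiso_sym isoF; have [[hom_ph' _] _] := natiso_sym isoG.
rewrite /transfer_counit -!mulmxA nat_th'; last exact: hom_transfer_unit.
rewrite !mulmxA -(mulmxA _ (Fm F _ _ (ph' _))).
rewrite -(fmap_comp F (hom_transfer_unit M) (hom_ph' _)) /transfer_unit !mulmxA.
rewrite (proj1 (inv_ph _)) mul1mx (fmap_comp F (hom_unit adjFG M) (fmap_hom G (hom_th M))).
rewrite mulmxA (counit_natural adjFG (hom_th M)) -(mulmxA (th M)) triangle_left //.
by rewrite mulmx1 (proj2 (inv_th M)).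
Qed.

Lemma transfer_triangle_right M :
  Fm G' _ M (transfer_counit M) *m transfer_unit (fobj G' M) = 1%:M.
Proof.
have [[hom_th _] inv_th] := isoF; have [[_ nat_ph] inv_ph] := isoG.
have [[hom_ph' _] _] := natiso_sym isoG.
rewrite /transfer_unit !mulmxA -nat_ph; last exact: hom_transfer_counit.
rewrite -(mulmxA (ph M)) -(fmap_comp G (hom_th _) (hom_transfer_counit M)) /transfer_counit.
rewrite -(mulmxA _ (th' _)) (proj1 (inv_th _)) mulmx1.
rewrite (fmap_comp G (fmap_hom F (hom_ph' M)) (hom_counit adjFG M)) -!mulmxA.
rewrite -(unit_natural adjFG (hom_ph' M)) (mulmxA (Fm G _ _ (eps M))) triangle_right //.
by rewrite mul1mx (proj2 (inv_ph M)).
Qed.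

Lemma adjunction_transfer : adjunction F' G' transfer_unit transfer_counit.
Proof.
split; [split=> [M|M N f]; [exact: hom_transfer_unit | exact: transfer_unit_natural] |].
split; [split=> [M|M N f]; [exact: hom_transfer_counit | exact: transfer_counit_natural] |].
by split=> M; [apply: transfer_triangle_left | apply: transfer_triangle_right].
Qed.

End AdjunctionTransfer.

(** * Realising matrices by functors *)

Section Elementary.
Variables i j : 'I_n.

Definition elem_obj M : amod := isotypic i (mult M j).
Definition elem_map M N (f : 'M[k]_(mdim N, mdim M)) : 'M[k]_(mult N j, mult M j) :=
  isot_proj N j *m f *m isot_incl M j.

Lemma elem_hom M N f : homm M N f -> homm (elem_obj M) (elem_obj N) (elem_map f).
Proof. by move=> _; apply: hom_isotypic. Qed.

Lemma elem_id M : elem_map (1%:M : 'M[k]_(mdim M)) = 1%:M.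
Proof. by rewrite /elem_map mulmx1 isot_proj_incl. Qed.

Lemma elem_comp M N P (f : 'M[k]_(mdim N, mdim M)) (g : 'M[k]_(mdim P, mdim N)) :
  homm M N f -> homm N P g -> elem_map (g *m f) = elem_map g *m elem_map f.
Proof.
move=> _ hg; rewrite /elem_map !mulmxA -(mulmxA _ (isot_incl N j)) isot_incl_proj.
by rewrite -(mulmxA _ g (idem_mx N j)) -(hom_idem_mx hg) mulmxA isot_proj_idem.
Qed.

Lemma elem_lin M N c (f g : 'M[k]_(mdim N, mdim M)) :
  homm M N f -> homm M N g -> elem_map (c *: f + g) = c *: elem_map f + elem_map g.
Proof. by move=> _ _; rewrite /elem_map mulmxDr mulmxDl -scalemxAr -scalemxAl. Qed.

Definition elem : endofunctor k n :=
  @EndoFunctor k n elem_obj elem_map elem_hom elem_id elem_comp elem_lin.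

End Elementary.

Lemma MF_elem i j : MF (elem i j) = delta_mx i j.
Proof.
apply/matrixP => r s; rewrite !mxE /= /elem_obj mult_isotypic mult_simple.
by rewrite [s == j]eq_sym; case: (r == i); case: (j == s).
Qed.

Lemma adjunction_elem i j :
  adjunction (elem i j) (elem j i)
    (fun M => isot_proj (elem_obj i j M) i *m isot_proj M j)
    (fun M => isot_incl M i *m isot_incl (elem_obj j i M) j).
Proof.
have idem_elem l l' M : idem_mx (elem_obj l l' M) l = 1%:M.
  by rewrite idem_mx_isotypic eqxx.
split; [split=> [M a|M N f hf] /= | split; [split=> [M a|M N f hf] /= | split=> M /=]].
- by rewrite -mulmxA isot_proj_act -scalemxAr mul_scalar_mx.
- rewrite /elem_map !mulmxA -(mulmxA _ (isot_incl _ i)) isot_incl_proj idem_elem mulmx1.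
  rewrite -(mulmxA _ (isot_incl M j)) isot_incl_proj -(mulmxA _ f) -(hom_idem_mx hf).
  by rewrite [RHS]mulmxA -(mulmxA _ _ (idem_mx N j)) isot_proj_idem.
- by rewrite mulmxA act_isot_incl -scalemxAl mul_mx_scalar.
- rewrite /elem_map !mulmxA -(mulmxA _ (isot_incl _ j)) isot_incl_proj idem_elem mulmx1.
  by rewrite isot_incl_proj (hom_idem_mx hf) -(mulmxA f) idem_isot_incl.
- rewrite /elem_map !mulmxA -(mulmxA _ (isot_incl _ j)) isot_incl_proj idem_elem mulmx1.
  by rewrite -mulmxA isot_proj_incl mulmx1 (isot_incl_proj (elem_obj i j M)) idem_elem.
- rewrite /elem_map !mulmxA isot_proj_incl mul1mx -(mulmxA _ (isot_incl _ i)).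
  by rewrite isot_incl_proj idem_elem mulmx1 (isot_incl_proj (elem_obj j i M)) idem_elem.
Qed.

Lemma adjoint_elem i j : adjoint (elem i j) (elem j i).
Proof. by do 2 eexists; apply: adjunction_elem. Qed.

Definition mxfun (X : 'M[nat]_n) : endofunctor k n :=
  foldr (fun p acc => fsum (fmuln (elem p.1 p.2) (X p.1 p.2)) acc) (fzero k n)
    (index_enum ('I_n * 'I_n)%type).
Definition mxfun_radj (X : 'M[nat]_n) : endofunctor k n :=
  foldr (fun p acc => fsum (fmuln (elem p.2 p.1) (X p.1 p.2)) acc) (fzero k n)
    (index_enum ('I_n * 'I_n)%type).

Lemma adjoint_mxfun X : adjoint (mxfun X) (mxfun_radj X).
Proof.
rewrite /mxfun /mxfun_radj; elim: index_enum => [|p s IH] /=.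
  by do 2 eexists; apply: adjunction_fzero.
by apply: adjoint_fsum => //; apply/adjoint_fmuln/adjoint_elem.
Qed.

Lemma mulmxn_natE m (A : 'M[nat]_m) c (r s : 'I_m) : (A *+ c) r s = (A r s * c)%N.
Proof. by rewrite mulmxnE -mulr_natr natn. Qed.

Lemma MF_mxfun X : MF (mxfun X) = X.
Proof.
rewrite /mxfun MF_foldr_fsum; apply/matrixP => r s; rewrite summxE (bigD1 (r, s)) //=.
rewrite MF_fmuln MF_elem mulmxn_natE mxE !eqxx big1 ?addr0 ?mul1n // => -[c d] /= cd.
rewrite MF_fmuln MF_elem mulmxn_natE mxE.
by case: eqP => [rc|]; case: eqP => [sd|] //=; move: cd; rewrite rc sd eqxx.
Qed.

Lemma MF_mxfun_radj X : MF (mxfun_radj X) = X^T.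
Proof.
rewrite /mxfun_radj MF_foldr_fsum; apply/matrixP => r s; rewrite summxE (bigD1 (s, r)) //=.
rewrite MF_fmuln MF_elem mulmxn_natE !mxE !eqxx big1 ?addr0 ?mul1n // => -[c d] /= cd.
rewrite MF_fmuln MF_elem mulmxn_natE mxE.
by case: eqP => [rd|]; case: eqP => [sc|] //=; move: cd; rewrite rd sc eqxx.
Qed.

(* mxfun X and mxfun_radj X are both isomorphic to F when X = MF F = X^T. *)
Lemma sym_selfadjoint F : symmetric_mx (MF F) -> selfadjoint F.
Proof.
move=> symF; apply/selfadjointE.
have [eta [eps adjX]] := adjoint_mxfun (MF F).
exists (transfer_unit eta (funiso (mxfun (MF F)) F) (funiso (mxfun_radj (MF F)) F)).
exists (transfer_counit eps (funiso F (mxfun (MF F))) (funiso F (mxfun_radj (MF F)))).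
by apply: adjunction_transfer adjX _ _; apply: natiso_funiso;
  rewrite ?MF_mxfun ?MF_mxfun_radj ?symF.
Qed.

End Modules.

Theorem proposition25 (k : closedFieldType) (n : nat) :
  (forall F : endofunctor k n, selfadjoint F <-> symmetric_mx (MF F)) /\
  (forall g h : {poly nat},
    (forall F : endofunctor k n,
        fiso (fpoly g F) (fpoly h F) -> mxpoly_nat g (MF F) = mxpoly_nat h (MF F)) /\
    (forall F G : endofunctor k n, fiso F G -> MF F = MF G) /\
    (forall F G : endofunctor k n,
        fiso (fpoly g F) (fpoly h F) -> fiso (fpoly g G) (fpoly h G) ->
        MF F = MF G -> fiso F G) /\
    (forall X : 'M[nat]_n, mxpoly_nat g X = mxpoly_nat h X ->
        exists F : endofunctor k n, fiso (fpoly g F) (fpoly h F) /\ MF F = X) /\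
    (forall F : endofunctor k n,
        fiso (fpoly g F) (fpoly h F) -> selfadjoint F -> symmetric_mx (MF F)) /\
    (forall X : 'M[nat]_n, mxpoly_nat g X = mxpoly_nat h X -> symmetric_mx X ->
        exists F : endofunctor k n,
          selfadjoint F /\ fiso (fpoly g F) (fpoly h F) /\ MF F = X)).
Proof.
have selfadjoint_symP (F : endofunctor k n) : selfadjoint F <-> symmetric_mx (MF F).
  by split; [apply: selfadjoint_sym | apply: sym_selfadjoint].
have fiso_fpoly g h (X : 'M[nat]_n) : mxpoly_nat g X = mxpoly_nat h X ->
    fiso (fpoly g (mxfun k X)) (fpoly h (mxfun k X)).
  by move=> gh; apply: fiso_of_MF; rewrite !MF_fpoly MF_mxfun.
split=> // g h; split; [|split; [|split; [|split; [|split]]]].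
- by move=> F isoF; rewrite -!MF_fpoly; apply: fiso_MF.
- exact: fiso_MF.
- by move=> F G _ _; apply: fiso_of_MF.
- by move=> X gh; exists (mxfun k X); rewrite MF_mxfun; split=> //; apply: fiso_fpoly.
- by move=> F _ /selfadjoint_symP.
- move=> X gh symX; exists (mxfun k X); rewrite MF_mxfun.
  by split; [apply/selfadjoint_symP; rewrite MF_mxfun | split=> //; apply: fiso_fpoly].
Qed.
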